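(* Let $\mathcal{G}=(V,E,\lambda)$ be a happy temporal graph whose footprint $(V,E)$ is a complete graph. Then $\mathcal{G}$ is bidirectionally temporally connected, but for every edge $e\in E$, the temporal graph obtained from $\mathcal{G}$ by removing $e$ is not bidirectionally temporally connected.
   Context: A temporal graph is $\mathcal{G}=(V,E,\lambda)$ with $V$ finite, $E$ undirected edges, $\lambda:E\to 2^{\mathbb{N}}$ the time labels; $(V,E)$ is the footprint. It is simple if every edge has exactly one label, proper if no two adjacent edges share a label, and happy if both simple and proper. A temporal path is a sequence of pairs $(e_i,t_i)$, $t_i\in\lambda(e_i)$, with $\langle e_i\rangle$ a path in the footprint and $\langle t_i\rangle$ non-decreasing (non-strict) or increasing (strict); in proper graphs the two notions coincide. A bi-path between $u$ and $v$ is a pair $(p_1,p_2)$ with $p_1$ a temporal path from $u$ to $v$ and $p_2$ a temporal path from $v$ to $u$ along the same underlying path reversed. $\mathcal{G}$ is bidirectionally temporally connected if every pair of distinct vertices is joined by a bi-path. *)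

From mathcomp Require Import all_boot.
Set Implicit Arguments. Unset Strict Implicit. Unset Printing Implicit Defensive.

(* A temporal graph on a finite vertex type V is given by
   - its footprint edge relation E : rel V (undirected: symmetric, irreflexive),
   - its labelling lam : V -> V -> nat -> Prop, where lam x y is the set of
     time labels of the undirected edge {x,y} (so lam x y = lam y x). *)

Definition undirected (V : finType) (E : rel V) (lam : V -> V -> nat -> Prop) :=
  (forall x y, E x y = E y x) /\ (forall x, ~~ E x x) /\
  (forall x y t, lam x y t <-> lam y x t).

Definition complete_footprint (V : finType) (E : rel V) :=
  forall x y, E x y = (x != y).

Definition simple_tg (V : finType) (E : rel V) (lam : V -> V -> nat -> Prop) :=
  forall x y, E x y -> exists t, lam x y t /\ forall t', lam x y t' -> t' = t.

Definition proper_tg (V : finType) (E : rel V) (lam : V -> V -> nat -> Prop) :=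
  forall x y z t, E x y -> E y z -> x != z -> lam x y t -> lam y z t -> False.

Definition happy (V : finType) (E : rel V) (lam : V -> V -> nat -> Prop) :=
  simple_tg E lam /\ proper_tg E lam.

Definition temporal_path (V : finType) (E : rel V) (lam : V -> V -> nat -> Prop)
    (strict : bool) (p : seq V) (ts : seq nat) : Prop :=
  match p with
  | [::] => False
  | x :: q =>
      [/\ path E x q, uniq p, size ts = size q,
          (forall i, i < size q -> lam (nth x p i) (nth x p i.+1) (nth 0 ts i))
        & sorted (if strict then (ltn : rel nat) else (leq : rel nat)) ts]
  end.

Definition bipath (V : finType) (E : rel V) (lam : V -> V -> nat -> Prop)
    (strict : bool) (u v : V) : Prop :=
  exists (p : seq V) (ts1 ts2 : seq nat),
    [/\ head v p = u, last u p = v,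
        temporal_path E lam strict p ts1 & temporal_path E lam strict (rev p) ts2].

Definition bidir_connected (V : finType) (E : rel V) (lam : V -> V -> nat -> Prop)
    (strict : bool) : Prop :=
  forall u v : V, u != v -> bipath E lam strict u v.

(* footprint with the undirected edge {a,b} removed (labels unchanged; labels
   of non-edges are never used) *)
Definition remove_edge (V : finType) (E : rel V) (a b : V) : rel V :=
  fun x y => E x y && ~~ (((x == a) && (y == b)) || ((x == b) && (y == a))).

(* A single edge is a bi-path, so a complete footprint is bidirectionally
   connected.  Conversely, if a temporal path and its reverse both traverse two
   consecutive edges {x,y}, {y,z}, the forward path needs t(xy) <= t(yz) and the
   backward one t(yz) <= t(xy); simplicity makes these the same two labels, so
   they coincide, which properness forbids.  Hence in a happy graph every
   bi-path is a single edge, and after deleting {a,b} there is no bi-path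
   between a and b. *)
From mathcomp Require Import all_boot.

Set Implicit Arguments.
Unset Strict Implicit.
Unset Printing Implicit Defensive.

Lemma sorted_time_leq (strict : bool) (ts : seq nat) :
  sorted (if strict then (ltn : rel nat) else (leq : rel nat)) ts ->
  sorted leq ts.
Proof. by case: strict => //; apply: sub_sorted => m n /ltnW. Qed.

Lemma simple_tg_sub (V : finType) (E' E : rel V) (lam : V -> V -> nat -> Prop) :
  subrel E' E -> simple_tg E lam -> simple_tg E' lam.
Proof. by move=> sE' simpleE x y /sE'; apply: simpleE. Qed.

Lemma proper_tg_sub (V : finType) (E' E : rel V) (lam : V -> V -> nat -> Prop) :
  subrel E' E -> proper_tg E lam -> proper_tg E' lam.
Proof. by move=> sE' properE x y z t /sE' Exy /sE'; apply: properE. Qed.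

Lemma remove_edge_sub (V : finType) (E : rel V) (a b : V) :
  subrel (remove_edge E a b) E.
Proof. by move=> x y /andP[]. Qed.

Section HappyBipaths.

Variables (V : finType) (E : rel V) (lam : V -> V -> nat -> Prop) (strict : bool).

Hypothesis lam_sym : forall x y t, lam x y t -> lam y x t.

Lemma bipath_of_edge (u v : V) (t : nat) :
  u != v -> E u v -> E v u -> lam u v t -> bipath E lam strict u v.
Proof.
move=> uv Euv Evu Luv; exists [:: u; v], [:: t], [:: t].
split=> //; split=> //=; rewrite ?inE ?andbT ?Euv ?Evu //.
- by case.
- by rewrite eq_sym.
- by case=> // _; apply: lam_sym.
Qed.

Lemma temporal_path_wedge (p : seq V) (ts : seq nat) (x y z : V) :
  temporal_path E lam strict p ts -> infix [:: x; y; z] p ->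
  exists t t', [/\ lam x y t, lam y z t' & t <= t'].
Proof.
case: p => [|v q] // [_ _ size_ts lab sorted_ts] /infixP[pre [suf def_p]].
have nth_p k : nth v (v :: q) (size pre + k) = nth v [:: x, y, z & suf] k.
  by rewrite -nth_drop def_p drop_size_cat.
have lt_q k : k < 2 -> size pre + k < size q.
  have := congr1 size def_p; rewrite /= size_cat /= addnS => -[->] lt_k2.
  by rewrite ltn_add2l (leq_trans lt_k2).
exists (nth 0 ts (size pre + 0)), (nth 0 ts (size pre + 1)); split.
- by have := lab _ (lt_q 0 isT); rewrite -addnS !nth_p.
- by have := lab _ (lt_q 1 isT); rewrite -addnS !nth_p.
- apply: (sorted_leq_nth leq_trans leqnn 0 (sorted_time_leq sorted_ts));
    by rewrite ?inE /= ?size_ts ?lt_q ?leq_add2l.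
Qed.

Hypotheses (simple_E : simple_tg E lam) (proper_E : proper_tg E lam).

Lemma two_way_temporal_path_size (p : seq V) (ts ts' : seq nat) :
  temporal_path E lam strict p ts -> temporal_path E lam strict (rev p) ts' ->
  size p <= 2.
Proof.
case: p => [|x [|y [|z r]]] // fwd bwd.
have [/and3P[Exy Eyz _] /andP[xNyzr _] _ _ _] := fwd.
have xz : x != z by move: xNyzr; rewrite !inE => /norP[_ /norP[]].
have [t1 [t2 [Lxy Lyz le_t12]]] := temporal_path_wedge fwd (prefix_infix _ r).
have xyz_rev : infix (rev [:: x; y; z]) (rev [:: x, y, z & r]).
  by rewrite infix_rev (prefix_infix _ r).
have [s1 [s2 [Lzy Lyx le_s12]]] := temporal_path_wedge bwd xyz_rev.
have [tx [_ t_xy]] := simple_E Exy.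
have [ty [_ t_yz]] := simple_E Eyz.
have t21 : t2 = t1.
  apply/eqP; rewrite eqn_leq le_t12 andbT.
  by rewrite (t_yz _ Lyz) -(t_yz _ (lam_sym Lzy)) (t_xy _ Lxy) -(t_xy _ (lam_sym Lyx)).
by case: (proper_E Exy Eyz xz Lxy); rewrite -t21.
Qed.

Lemma happy_bipath_edge (u v : V) :
  u != v -> bipath E lam strict u v -> E u v.
Proof.
move=> uv [p [ts [ts' [head_p last_p fwd bwd]]]].
have := two_way_temporal_path_size fwd bwd.
case: p head_p last_p fwd {bwd} => [|x [|y []]] //= -> => [v_u|-> [/andP[]//]].
by rewrite v_u eqxx in uv.
Qed.

End HappyBipaths.

Theorem lemma4 (V : finType) (E : rel V) (lam : V -> V -> nat -> Prop)
    (strict : bool) :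
  undirected E lam -> happy E lam -> complete_footprint E ->
  bidir_connected E lam strict /\
  (forall a b : V, E a b -> ~ bidir_connected (remove_edge E a b) lam strict).
Proof.
move=> [E_sym [_ lam_sym_iff]] [simple_E proper_E] complete_E.
have lam_sym x y t : lam x y t -> lam y x t by case: (lam_sym_iff x y t).
split=> [u v uv | a b Eab connected_Eab].
  have Euv : E u v by rewrite complete_E.
  have [t [Luv _]] := simple_E u v Euv.
  by apply: (bipath_of_edge strict lam_sym uv Euv _ Luv); rewrite E_sym.
have ab : a != b by rewrite -complete_E.
have sub_E := @remove_edge_sub V E a b.
have := happy_bipath_edge lam_sym (simple_tg_sub sub_E simple_E)
  (proper_tg_sub sub_E proper_E) ab (connected_Eab a b ab).
by rewrite /remove_edge !eqxx andbF.
Qed.
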